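(* Let $r\ge1$ and let $\mathcal S_r\Lambda^1(I^2)=\mathcal P_r\Lambda^1(I^2)+\operatorname{span}\{d(x^{r+1}y),\,d(xy^{r+1})\}$. For an integer $s\ge1$, $\mathcal Q^-_s\Lambda^1(I^2)\subset\mathcal S_r\Lambda^1(I^2)$ if and only if $2s-1\le r$. Consequently (by Theorem 4 with $n=2$, $k=1$), the reference space $\mathcal S_r\Lambda^1(\hat K)$ yields $L^2$ approximation of order $h^{\lfloor (r+1)/2\rfloor}$ on meshes of bilinearly mapped quadrilaterals.
   Context: $I=[0,1]$, coordinates $(x,y)$ on $I^2=\hat K$. $\mathcal P_r\Lambda^1(I^2)$: $1$-forms $p\,dx+q\,dy$ with $p,q$ polynomials of total degree $\le r$. $\mathcal Q^-_s\Lambda^1(I^2)=\mathcal P_{s-1,s}\,dx\oplus\mathcal P_{s,s-1}\,dy$, where $\mathcal P_{a,b}$ is the space of polynomials of degree $\le a$ in $x$ and $\le b$ in $y$. Theorem 4 (case $n=2$, $k=1$): for $K=F_K(\hat K)$ with $F_K$ bilinear and $V(K)=(F_K^{-1})^*V(\hat K)$ (pullback of $1$-forms: $\hat v=DF_K^T(v\circ F_K)$ in vector proxy), if $\mathcal Q^-_s\Lambda^1(\hat K)\subset V(\hat K)$ then $\mathcal P_{s-1}\Lambda^1(K)\subset V(K)$ and $\inf_{v\in V(K)}\|u-v\|_{L^2\Lambda^1(K)}\le Ch_K^{s}|u|_{H^{s}\Lambda^1(K)}$. *)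

(* Bivariate polynomials in (x,y) are encoded as
   {poly {poly R}}: the outer variable is y, coefficients are polynomials in x.
   So p = \sum_j (p`_j)(x) y^j, and the coefficient of x^i y^j is (p`_j)`_i. *)
From HB Require Import structures.
From mathcomp Require Import all_boot all_order all_algebra.
Set Implicit Arguments. Unset Strict Implicit. Unset Printing Implicit Defensive.
Import Order.TTheory GRing.Theory Num.Theory.
Local Open Scope ring_scope.

Section Defs.
Variable R : realFieldType.

Definition poly2 := {poly {poly R}}.

Definition coef2 (p : poly2) (i j : nat) : R := (p`_j)`_i.

Definition mono2 (a b : nat) : poly2 := ('X^a)%:P * 'X^b.

Definition dx (p : poly2) : poly2 := map_poly (fun c : {poly R} => c^`()) p.
Definition dy (p : poly2) : poly2 := p^`().

(* 1-forms p dx + q dy, in vector proxy (p, q) *)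
Definition form1 := (poly2 * poly2)%type.

Definition dform (f : poly2) : form1 := (dx f, dy f).

Definition totdeg_le (r : nat) (p : poly2) : Prop :=
  forall i j : nat, (r < i + j)%N -> coef2 p i j = 0.

Definition bideg_le (a b : nat) (p : poly2) : Prop :=
  forall i j : nat, (a < i)%N \/ (b < j)%N -> coef2 p i j = 0.

Definition inPr1 (r : nat) (w : form1) : Prop :=
  totdeg_le r w.1 /\ totdeg_le r w.2.

Definition inQminus1 (s : nat) (w : form1) : Prop :=
  bideg_le s.-1 s w.1 /\ bideg_le s s.-1 w.2.

Definition inSr1 (r : nat) (w : form1) : Prop :=
  exists (u : form1) (a b : R),
    inPr1 r u /\
    w.1 = u.1 + (a%:P)%:P * (dform (mono2 r.+1 1)).1 + (b%:P)%:P * (dform (mono2 1 r.+1)).1 /\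
    w.2 = u.2 + (a%:P)%:P * (dform (mono2 r.+1 1)).2 + (b%:P)%:P * (dform (mono2 1 r.+1)).2.

End Defs.

(* Sufficiency: a polynomial of bidegree (a, b) has total degree <= a + b, so
   Q^-_s Lambda^1 = P_{s-1,s} dx + P_{s,s-1} dy lies in P_{2s-1} Lambda^1,
   which is contained in P_r Lambda^1 and hence in S_r Lambda^1 when
   2s - 1 <= r.

   Necessity: the only monomials of total degree > r occurring in the
   dx-component of a form of S_r Lambda^1 come from the two extra generators,
   d(x^{r+1} y) = (r+1) x^r y dx + ..., and d(x y^{r+1}) = y^{r+1} dx + ....
   Hence the coefficient of x^i y^j in that component vanishes whenever
   i + j > r and (i, j) is neither (r, 1) nor (0, r+1).  If 2s - 1 > r then
   s >= 2, and the form x^{s-1} y^s dx of Q^-_s has a nonzero coefficient at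
   (s-1, s), which is of total degree 2s - 1 > r and is neither exceptional
   index: so it is not in S_r Lambda^1. *)

From HB Require Import structures.
From mathcomp Require Import all_boot all_order all_algebra.
From mathcomp Require Import zify.
Set Implicit Arguments. Unset Strict Implicit. Unset Printing Implicit Defensive.
Import Order.TTheory GRing.Theory Num.Theory.
Local Open Scope ring_scope.

Section BivariateForms.
Variable R : realFieldType.
Implicit Types (p q : poly2 R) (w : form1 R).

Lemma coef2_mono a b i j :
  coef2 (mono2 R a b) i j = ((i == a) && (j == b))%:R.
Proof.
rewrite /coef2 /mono2 coefMXn; case: ltnP => hj.
  by rewrite coef0 (_ : (j == b) = false) ?andbF //; apply/negbTE; lia.
rewrite coefC; case: eqP => [hjb|hjb].
  by rewrite (_ : j = b) ?eqxx ?andbT ?coefXn //; lia.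
by rewrite coef0 (_ : (j == b) = false) ?andbF //; apply/negbTE; lia.
Qed.

Lemma coef2D p q i j : coef2 (p + q) i j = coef2 p i j + coef2 q i j.
Proof. by rewrite /coef2 !coefD. Qed.

Lemma coef2CM (c : R) p i j : coef2 ((c%:P)%:P * p) i j = c * coef2 p i j.
Proof. by rewrite /coef2 !coefCM. Qed.

Lemma coef2_dx p i j : coef2 (dx p) i j = coef2 p i.+1 j *+ i.+1.
Proof. by rewrite /coef2 /dx coef_map_id0 ?deriv0 // coef_deriv. Qed.

Lemma bideg_totdeg a b p : bideg_le a b p -> totdeg_le (a + b) p.
Proof. by move=> hp i j hij; apply: hp; lia. Qed.

Lemma totdeg_le_mono r r' p : (r <= r')%N -> totdeg_le r p -> totdeg_le r' p.
Proof. by move=> hrr' hp i j hij; apply: hp; lia. Qed.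

Lemma Pr1_mono r r' w : (r <= r')%N -> inPr1 r w -> inPr1 r' w.
Proof. by move=> hrr' [h1 h2]; split; apply: totdeg_le_mono hrr' _. Qed.

Lemma Qminus1_Pr1 s w : inQminus1 s w -> inPr1 (2 * s - 1) w.
Proof.
move=> [h1 h2]; have e1 : (2 * s - 1 = s.-1 + s)%N by lia.
have e2 : (2 * s - 1 = s + s.-1)%N by lia.
by split; [rewrite e1 | rewrite e2]; apply: bideg_totdeg.
Qed.

Lemma Pr1_Sr1 r w : inPr1 r w -> inSr1 r w.
Proof. by case: w => w1 w2 hw; exists (w1, w2), 0, 0; rewrite !mul0r !addr0. Qed.

Lemma Sr1_dx_coef_high r w i j :
  inSr1 r w -> (r < i + j)%N ->
  (i, j) != (r, 1%N) -> (i, j) != (0%N, r.+1) -> coef2 w.1 i j = 0.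
Proof.
move=> [u [a [b [[hu _] [-> _]]]]] hij; rewrite !xpair_eqE => hr1 h0r.
rewrite !coef2D !coef2CM /dform /= !coef2_dx !coef2_mono hu //.
by rewrite !eqSS (negbTE hr1) (negbTE h0r) !mul0rn !mulr0 !addr0.
Qed.

Lemma witness_Qminus1 s : inQminus1 s (mono2 R s.-1 s, 0).
Proof.
split=> i j hij /=; last by rewrite /coef2 !coef0.
rewrite coef2_mono; case: hij => h.
  by rewrite (_ : (i == s.-1) = false) //; apply/negbTE; lia.
by rewrite (_ : (j == s) = false) ?andbF //; apply/negbTE; lia.
Qed.

End BivariateForms.

Theorem mainTheorem9 (R : realFieldType) (r s : nat) :
  (1 <= r)%N -> (1 <= s)%N ->
  ((forall w : form1 R, inQminus1 s w -> inSr1 r w) <-> (2 * s - 1 <= r)%N).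
Proof.
move=> hr hs; split=> [incl | hrs w hw]; last first.
  by apply/Pr1_Sr1/(Pr1_mono hrs)/Qminus1_Pr1.
case: (leqP (2 * s - 1) r) => // hlt; exfalso.
have hS := incl _ (witness_Qminus1 R s).
have hdeg : (r < s.-1 + s)%N by lia.
have hne1 : (s.-1, s) != (r, 1%N).
  by rewrite xpair_eqE; apply/negP => /andP [/eqP ? /eqP ?]; lia.
have hne2 : (s.-1, s) != (0%N, r.+1).
  by rewrite xpair_eqE; apply/negP => /andP [/eqP ? /eqP ?]; lia.
have := Sr1_dx_coef_high hS hdeg hne1 hne2.
by rewrite /= coef2_mono !eqxx => /eqP; rewrite oner_eq0.
Qed.
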